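(* Let $M,N$ be $\mathtt{dBang}$ terms with $M\to_S N$ (one surface step). Then for every resource term $m\sqsubset M$, either $m$ reduces to $\emptyset$ in one surface resource step, or there is a resource term $n\sqsubset N$ such that $m$ reduces to $n$ in one surface resource step.
   Context: \textbf{dBang.} Terms: $M,N ::= x \mid \lambda x.M \mid MN \mid M[N/x] \mid\ !M \mid \mathrm{der}\,M$ ($M[N/x]$ explicit substitution binding $x$); $M\{N/x\}$ capture-avoiding substitution. List contexts $L ::= \square\mid L[N/x]$. Root rules: $L\langle\lambda x.M\rangle N \mapsto L\langle M[N/x]\rangle$; $M[L\langle !N\rangle/x]\mapsto L\langle M\{N/x\}\rangle$; $\mathrm{der}(L\langle !N\rangle)\mapsto L\langle N\rangle$. Surface contexts: $S ::= \square\mid\lambda x.S\mid SM\mid MS\mid S[M/x]\mid M[S/x]\mid\mathrm{der}\,S$ (hole not under $!$); $\to_S$ is the closure of the root rules under surface contexts. \textbf{Resources.} Resource terms: $m,n ::= x\mid\lambda x.m\mid mn\mid m[n/x]\mid\mathrm{der}\,m\mid[m_1,\dots,m_k]$ ($k\ge0$ multisets). Resource list contexts $l::=\square\mid l[n/x]$. Root resource rules (target a resource term or the zero symbol $\emptyset$): $\mathrm{der}(l\langle[m]\rangle)\to l\langle m\rangle$; $\mathrm{der}(l\langle[m_1,\dots,m_k]\rangle)\to\emptyset$ if $k\ne1$; $l\langle\lambda x.m\rangle n\to l\langle m[n/x]\rangle$; $m[l\langle[n_1,\dots,n_k]\rangle/x]\to l\langle m\{n_{\sigma(1)}/x_1,\dots,n_{\sigma(k)}/x_k\}\rangle$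 for every permutation $\sigma$ when $x_1,\dots,x_k$ are exactly the $k$ free occurrences of $x$ in $m$, and $\to\emptyset$ when the number of free occurrences of $x$ in $m$ differs from $k$. Surface resource reduction is the closure under resource surface contexts $s::=\square\mid\lambda x.s\mid s n\mid m s\mid s[n/x]\mid m[s/x]\mid\mathrm{der}\,s$ (not inside bags), a term reducing to $\emptyset$ whenever a subterm in surface position does. \textbf{Approximation.} $x\sqsubset x$; $\lambda x.m\sqsubset\lambda x.M$ if $m\sqsubset M$; $mn\sqsubset MN$ and $m[n/x]\sqsubset M[N/x]$ if $m\sqsubset M,n\sqsubset N$; $\mathrm{der}\,m\sqsubset\mathrm{der}\,M$ if $m\sqsubset M$; $[m_1,\dots,m_k]\sqsubset\ !M$ for any $k\ge0$ if every $m_i\sqsubset M$. *)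

(* dBang calculus and its resource calculus, in de Bruijn syntax
   (terms are thus taken up to alpha-equivalence, as in the paper). *)
From Stdlib Require Import Arith List Permutation.
Import ListNotations.

(* Es M N  represents the explicit substitution  M[N/x]; it binds index 0 in M. *)
Inductive term : Type :=
| Var : nat -> term
| Lam : term -> term
| App : term -> term -> term
| Es  : term -> term -> term
| Bang : term -> term
| Der : term -> term.

Fixpoint lift (k c : nat) (t : term) : term :=
  match t with
  | Var n => if c <=? n then Var (n + k) else Var n
  | Lam t => Lam (lift k (S c) t)
  | App t u => App (lift k c t) (lift k c u)
  | Es t u => Es (lift k (S c) t) (lift k c u)
  | Bang t => Bang (lift k c t)
  | Der t => Der (lift k c t)
  end.

(* capture-avoiding substitution of s for index j (s lives in the context
   outside the j binders crossed); indices above j are decremented *)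
Fixpoint subst (j : nat) (s : term) (t : term) : term :=
  match t with
  | Var n => if n <? j then Var n else if n =? j then lift j 0 s else Var (n - 1)
  | Lam t => Lam (subst (S j) s t)
  | App t u => App (subst j s t) (subst j s u)
  | Es t u => Es (subst (S j) s t) (subst j s u)
  | Bang t => Bang (subst j s t)
  | Der t => Der (subst j s t)
  end.

(* list contexts L = [][N1/x1]...[Nk/xk] represented by [N1; ...; Nk];
   fill L M = L<M> *)
Fixpoint fill (L : list term) (M : term) : term :=
  match L with
  | [] => M
  | N :: L' => fill L' (Es M N)
  end.

Inductive root_step : term -> term -> Prop :=
| root_dB : forall L M N,
    root_step (App (fill L (Lam M)) N) (fill L (Es M (lift (length L) 0 N)))
| root_sb : forall L M N,
    (* M[L<!N>/x] |-> L<M{N/x}> *)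
    root_step (Es M (fill L (Bang N))) (fill L (subst 0 N (lift (length L) 1 M)))
| root_d : forall L N,
    root_step (Der (fill L (Bang N))) (fill L N).

(* closure under surface contexts (never under !) *)
Inductive sstep : term -> term -> Prop :=
| s_root : forall M N, root_step M N -> sstep M N
| s_lam : forall M N, sstep M N -> sstep (Lam M) (Lam N)
| s_appl : forall M N P, sstep M N -> sstep (App M P) (App N P)
| s_appr : forall M N P, sstep M N -> sstep (App P M) (App P N)
| s_esl : forall M N P, sstep M N -> sstep (Es M P) (Es N P)
| s_esr : forall M N P, sstep M N -> sstep (Es P M) (Es P N)
| s_der : forall M N, sstep M N -> sstep (Der M) (Der N).

(* bags [m1,...,mk] are represented by lists; the reduction below allows
   every ordering, so list order is immaterial *)
Inductive rterm : Type :=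
| RVar : nat -> rterm
| RLam : rterm -> rterm
| RApp : rterm -> rterm -> rterm
| REs  : rterm -> rterm -> rterm
| RDer : rterm -> rterm
| RBag : list rterm -> rterm.

Fixpoint rlift (k c : nat) (m : rterm) : rterm :=
  match m with
  | RVar n => if c <=? n then RVar (n + k) else RVar n
  | RLam m => RLam (rlift k (S c) m)
  | RApp m n => RApp (rlift k c m) (rlift k c n)
  | REs m n => REs (rlift k (S c) m) (rlift k c n)
  | RDer m => RDer (rlift k c m)
  | RBag ms => RBag (map (rlift k c) ms)
  end.

Fixpoint rocc (j : nat) (m : rterm) : nat :=
  match m with
  | RVar n => if n =? j then 1 else 0
  | RLam m => rocc (S j) m
  | RApp m n => rocc j m + rocc j n
  | REs m n => rocc (S j) m + rocc j n
  | RDer m => rocc j m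
  | RBag ms => list_sum (map (rocc j) ms)
  end.

(* linear substitution: lsub j ns m m' iff m' = m{n1/x_1,...,nk/x_k} where
   x_1..x_k are the free occurrences of index j in m, in left-to-right order,
   and ns = [n1;...;nk] (each ni used exactly once); indices above j are
   decremented. *)
Inductive lsub (j : nat) : list rterm -> rterm -> rterm -> Prop :=
| ls_var_eq : forall s, lsub j [s] (RVar j) (rlift j 0 s)
| ls_var_lt : forall n, n < j -> lsub j [] (RVar n) (RVar n)
| ls_var_gt : forall n, j < n -> lsub j [] (RVar n) (RVar (n - 1))
| ls_lam : forall ns m m', lsub (S j) ns m m' -> lsub j ns (RLam m) (RLam m')
| ls_app : forall ns1 ns2 m m' n n',
    lsub j ns1 m m' -> lsub j ns2 n n' -> lsub j (ns1 ++ ns2) (RApp m n) (RApp m' n')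
| ls_es : forall ns1 ns2 m m' n n',
    lsub (S j) ns1 m m' -> lsub j ns2 n n' -> lsub j (ns1 ++ ns2) (REs m n) (REs m' n')
| ls_der : forall ns m m', lsub j ns m m' -> lsub j ns (RDer m) (RDer m')
| ls_bag_nil : lsub j [] (RBag []) (RBag [])
| ls_bag_cons : forall ns1 ns2 m m' ms ms',
    lsub j ns1 m m' -> lsub j ns2 (RBag ms) (RBag ms') ->
    lsub j (ns1 ++ ns2) (RBag (m :: ms)) (RBag (m' :: ms')).

Fixpoint rfill (l : list rterm) (m : rterm) : rterm :=
  match l with
  | [] => m
  | n :: l' => rfill l' (REs m n)
  end.

Inductive rroot_step : rterm -> rterm -> Prop :=
| rr_der : forall l m, rroot_step (RDer (rfill l (RBag [m]))) (rfill l m)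
| rr_dB : forall l m n,
    rroot_step (RApp (rfill l (RLam m)) n) (rfill l (REs m (rlift (length l) 0 n)))
| rr_sb : forall l m ns ns' m',
    (* for every permutation sigma of the bag *)
    Permutation ns ns' ->
    lsub 0 ns' (rlift (length l) 1 m) m' ->
    rroot_step (REs m (rfill l (RBag ns))) (rfill l m').

(* root resource rules with target the zero symbol *)
Inductive rroot_zero : rterm -> Prop :=
| rz_der : forall l ms, length ms <> 1 -> rroot_zero (RDer (rfill l (RBag ms)))
| rz_sb : forall l m ns, rocc 0 m <> length ns -> rroot_zero (REs m (rfill l (RBag ns))).

(* surface resource reduction (not inside bags) *)
Inductive rstep : rterm -> rterm -> Prop :=
| r_root : forall m n, rroot_step m n -> rstep m n
| r_lam : forall m n, rstep m n -> rstep (RLam m) (RLam n)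
| r_appl : forall m n p, rstep m n -> rstep (RApp m p) (RApp n p)
| r_appr : forall m n p, rstep m n -> rstep (RApp p m) (RApp p n)
| r_esl : forall m n p, rstep m n -> rstep (REs m p) (REs n p)
| r_esr : forall m n p, rstep m n -> rstep (REs p m) (REs p n)
| r_der : forall m n, rstep m n -> rstep (RDer m) (RDer n).

Inductive rzero : rterm -> Prop :=
| z_root : forall m, rroot_zero m -> rzero m
| z_lam : forall m, rzero m -> rzero (RLam m)
| z_appl : forall m p, rzero m -> rzero (RApp m p)
| z_appr : forall m p, rzero m -> rzero (RApp p m)
| z_esl : forall m p, rzero m -> rzero (REs m p)
| z_esr : forall m p, rzero m -> rzero (REs p m)
| z_der : forall m, rzero m -> rzero (RDer m).

Inductive approx : rterm -> term -> Prop :=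
| ap_var : forall x, approx (RVar x) (Var x)
| ap_lam : forall m M, approx m M -> approx (RLam m) (Lam M)
| ap_app : forall m n M N, approx m M -> approx n N -> approx (RApp m n) (App M N)
| ap_es : forall m n M N, approx m M -> approx n N -> approx (REs m n) (Es M N)
| ap_der : forall m M, approx m M -> approx (RDer m) (Der M)
| ap_bag : forall ms M, Forall (fun m => approx m M) ms -> approx (RBag ms) (Bang M).

(* A root redex of M is approximated by a resource term of the same shape, so
   each dBang rule is matched by its resource counterpart, except when the bag
   has the wrong size, in which case the resource term reduces to the zero
   symbol.  The only real work is the substitution case: if the number of free
   occurrences of x in m is the size of a bag of approximants of N, then some
   linear substitution of that bag into m approximates M{N/x}; this follows by
   induction on M, distributing the bag over the occurrences. *)

From Stdlib Require Import Arith List Permutation Lia.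
Import ListNotations.

Lemma approx_rlift (M : term) (m : rterm) (k c : nat) :
  approx m M -> approx (rlift k c m) (lift k c M).
Proof.
  revert m k c; induction M; intros m k c Ha; inversion Ha; subst; simpl.
  - destruct (c <=? n); constructor.
  - constructor; auto.
  - constructor; auto.
  - constructor; auto.
  - constructor; rewrite Forall_map.
    eapply Forall_impl; [|eassumption]; auto.
  - constructor; auto.
Qed.

Lemma rocc_rlift_lt (m : rterm) (k c j : nat) :
  j < c -> rocc j (rlift k c m) = rocc j m.
Proof.
  revert m k c j; fix IH 1; intros m k c j Hj; destruct m as [n|m|m1 m2|m1 m2|m|ms]; simpl.
  - destruct (Nat.leb_spec c n); simpl; trivial.
    destruct (Nat.eqb_spec (n + k) j), (Nat.eqb_spec n j); lia.
  - apply IH; lia.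
  - rewrite !IH by lia; reflexivity.
  - rewrite !IH by lia; reflexivity.
  - apply IH; lia.
  - induction ms as [|m ms IHms]; simpl; trivial.
    rewrite IH, IHms by lia; reflexivity.
Qed.

Lemma split_at_lengths {A : Type} (l : list A) (a b : nat) :
  a + b = length l ->
  exists l1 l2, l = l1 ++ l2 /\ length l1 = a /\ length l2 = b.
Proof.
  intros Hl; exists (firstn a l), (skipn a l).
  rewrite firstn_skipn, length_firstn, length_skipn; split; [reflexivity | lia].
Qed.

Definition approx_subst_spec (M N : term) : Prop :=
  forall m j ns, approx m M -> Forall (fun n => approx n N) ns -> rocc j m = length ns ->
  exists m', lsub j ns m m' /\ approx m' (subst j N M).

Lemma approx_subst_bag (M N : term) (j : nat) (ms ns : list rterm) :
  approx_subst_spec M N ->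
  Forall (fun m => approx m M) ms -> Forall (fun n => approx n N) ns ->
  list_sum (map (rocc j) ms) = length ns ->
  exists ms', lsub j ns (RBag ms) (RBag ms') /\ Forall (fun m' => approx m' (subst j N M)) ms'.
Proof.
  intros HM Hms; revert ns; induction Hms as [|m ms Hm Hms IHms]; intros ns Hns Hocc; simpl in Hocc.
  - destruct ns; [|discriminate]. exists []; split; constructor.
  - destruct (split_at_lengths ns _ _ Hocc) as (ns1 & ns2 & -> & Hl1 & Hl2).
    apply Forall_app in Hns as [Hns1 Hns2].
    destruct (HM m j ns1 Hm Hns1 (eq_sym Hl1)) as (m' & Hsub & Hm').
    destruct (IHms ns2 Hns2 (eq_sym Hl2)) as (ms' & Hsubs & Hms').
    exists (m' :: ms'); split; constructor; assumption.
Qed.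

Lemma approx_subst (M N : term) : approx_subst_spec M N.
Proof.
  induction M as [x|M IHM|M1 IHM1 M2 IHM2|M1 IHM1 M2 IHM2|M IHM|M IHM];
    intros m j ns Ha Hns Hocc.
  - inversion Ha; subst; simpl in Hocc |- *.
    destruct (Nat.eqb_spec x j) as [->|Hne].
    + destruct ns as [|s [|]]; try discriminate.
      inversion Hns; subst; exists (rlift j 0 s); split; [constructor|].
      rewrite Nat.ltb_irrefl; apply approx_rlift; assumption.
    + destruct ns; [|discriminate].
      destruct (Nat.ltb_spec x j), (Nat.eqb_spec x j); try lia.
      * exists (RVar x); split; constructor; assumption.
      * exists (RVar (x - 1)); split; constructor; lia.
  - inversion Ha as [| m0 M0 Hm | | | |]; subst.
    destruct (IHM _ _ _ Hm Hns Hocc) as (m' & Hsub & Hm').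
    exists (RLam m'); split; constructor; assumption.
  - inversion Ha as [| | m1 m2 M1' M2' Hm1 Hm2 | | |]; subst.
    destruct (split_at_lengths ns _ _ Hocc) as (ns1 & ns2 & -> & Hl1 & Hl2).
    apply Forall_app in Hns as [Hns1 Hns2].
    destruct (IHM1 _ _ _ Hm1 Hns1 (eq_sym Hl1)) as (m1' & Hsub1 & Hm1').
    destruct (IHM2 _ _ _ Hm2 Hns2 (eq_sym Hl2)) as (m2' & Hsub2 & Hm2').
    exists (RApp m1' m2'); split; constructor; assumption.
  - inversion Ha as [| | | m1 m2 M1' M2' Hm1 Hm2 | |]; subst.
    destruct (split_at_lengths ns _ _ Hocc) as (ns1 & ns2 & -> & Hl1 & Hl2).
    apply Forall_app in Hns as [Hns1 Hns2].
    destruct (IHM1 _ _ _ Hm1 Hns1 (eq_sym Hl1)) as (m1' & Hsub1 & Hm1').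
    destruct (IHM2 _ _ _ Hm2 Hns2 (eq_sym Hl2)) as (m2' & Hsub2 & Hm2').
    exists (REs m1' m2'); split; constructor; assumption.
  - inversion Ha as [| | | | | ms M0 Hms]; subst.
    destruct (approx_subst_bag M N j ms ns IHM Hms Hns Hocc) as (ms' & Hsub & Hms').
    exists (RBag ms'); split; [|constructor]; assumption.
  - inversion Ha as [| | | | m0 M0 Hm |]; subst.
    destruct (IHM _ _ _ Hm Hns Hocc) as (m' & Hsub & Hm').
    exists (RDer m'); split; constructor; assumption.
Qed.

Lemma approx_fill_inv (L : list term) (P : term) (m : rterm) :
  approx m (fill L P) ->
  exists l p, m = rfill l p /\ Forall2 approx l L /\ approx p P.
Proof.
  revert P m; induction L as [|N L IHL]; intros P m Ha; simpl in Ha.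
  - exists [], m; repeat constructor; assumption.
  - destruct (IHL _ _ Ha) as (l & q & -> & Hl & Hq).
    inversion Hq as [| | | p n P' N' Hp Hn | |]; subst.
    exists (n :: l), p; repeat constructor; assumption.
Qed.

Lemma approx_rfill (l : list rterm) (L : list term) (p : rterm) (P : term) :
  Forall2 approx l L -> approx p P -> approx (rfill l p) (fill L P).
Proof.
  intros Hl; revert p P; induction Hl; intros p P Hp; simpl; auto using approx.
Qed.

Lemma approx_root_dB (L : list term) (M N : term) (m : rterm) :
  approx m (App (fill L (Lam M)) N) ->
  exists n, approx n (fill L (Es M (lift (length L) 0 N))) /\ rroot_step m n.
Proof.
  intros Ha; inversion Ha as [| | q n Q N' Hq Hn | | |]; subst.
  destruct (approx_fill_inv _ _ _ Hq) as (l & p & -> & Hl & Hp).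
  inversion Hp as [| p' M' Hp' | | | |]; subst.
  exists (rfill l (REs p' (rlift (length l) 0 n))); split; [|constructor].
  rewrite <- (Forall2_length Hl).
  apply approx_rfill; [|constructor; [|apply approx_rlift]]; assumption.
Qed.

Lemma approx_root_sb (L : list term) (M N : term) (m : rterm) :
  approx m (Es M (fill L (Bang N))) ->
  rroot_zero m \/
  exists n, approx n (fill L (subst 0 N (lift (length L) 1 M))) /\ rroot_step m n.
Proof.
  intros Ha; inversion Ha as [| | | p q M' Q Hp Hq | |]; subst.
  destruct (approx_fill_inv _ _ _ Hq) as (l & b & -> & Hl & Hb).
  inversion Hb as [| | | | | ns N' Hns]; subst.
  destruct (Nat.eq_dec (rocc 0 p) (length ns)) as [Hocc|Hocc]; [right | left; constructor; assumption].
  rewrite <- (Forall2_length Hl).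
  destruct (approx_subst _ N (rlift (length l) 1 p) 0 ns (approx_rlift _ _ _ _ Hp) Hns)
    as (p' & Hsub & Hp'); [rewrite rocc_rlift_lt by lia; exact Hocc|].
  exists (rfill l p'); split; [apply approx_rfill; assumption|].
  eapply rr_sb; [apply Permutation_refl | eassumption].
Qed.

Lemma approx_root_d (L : list term) (N : term) (m : rterm) :
  approx m (Der (fill L (Bang N))) ->
  rroot_zero m \/ exists n, approx n (fill L N) /\ rroot_step m n.
Proof.
  intros Ha; inversion Ha as [| | | | q Q Hq |]; subst.
  destruct (approx_fill_inv _ _ _ Hq) as (l & b & -> & Hl & Hb).
  inversion Hb as [| | | | | ns N' Hns]; subst.
  destruct ns as [|n [|n' ns]]; [left; constructor; simpl; lia | | left; constructor; simpl; lia].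
  right; inversion Hns; subst.
  exists (rfill l n); split; [apply approx_rfill|constructor]; assumption.
Qed.

Lemma approx_root_step (M N : term) (m : rterm) :
  root_step M N -> approx m M ->
  rroot_zero m \/ exists n, approx n N /\ rroot_step m n.
Proof.
  intros [L P Q | L P Q | L Q] Ha.
  - right; exact (approx_root_dB _ _ _ _ Ha).
  - exact (approx_root_sb _ _ _ _ Ha).
  - exact (approx_root_d _ _ _ Ha).
Qed.

Theorem mainTheorem3 : forall (M N : term), sstep M N ->
  forall m : rterm, approx m M ->
    rzero m \/ exists n : rterm, approx n N /\ rstep m n.
Proof.
  induction 1 as [M N Hroot| | | | | |]; intros m Ha.
  { destruct (approx_root_step M N m Hroot Ha) as [Hz | (n & Hn & Hs)].
    - left; constructor; assumption.
    - right; exists n; split; [|constructor]; assumption. }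
  all: inversion Ha; subst;
    edestruct IHsstep as [Hz | (n' & Hn & Hs)]; [eassumption | left | right];
    eauto using rzero, approx, rstep.
Qed.
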